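(* For an even integer $n\ge4$ and any integer $1\le k\le\frac{n-2}{2}$, $$\sum_{1\le i\le n/2}e_{2i}\,g_{n-2i,n}\prod_{j=k-i+1}^{\frac{n-2i}{2}}\frac{q^{2j}-1}{q^{2j-2k+2i}-1}=\frac{q^{(n-1)k}-1}{q-1}\prod_{j=k+1}^{n/2}\frac{q^{2j}-1}{q^{2j-2k}-1}.$$
   Context: $e_{2i}$ is the $E$-polynomial (in $q=uv$) of the variety of nondegenerate skew forms on $\mathbb C^{2i}$ up to scaling, i.e. of ${\mathrm{Pf}}^{\circ}(2i,\mathbb C^{2i})=\mathbb P(\wedge^2(\mathbb C^{2i})^{\vee})\setminus\{\text{degenerate forms}\}$. $g_{a,b}=\binom{b}{a}_q=\prod_{j=0}^{a-1}\frac{1-q^{b-j}}{1-q^{j+1}}$ is the $E$-polynomial of the Grassmannian $G(a,b)$. *)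

From HB Require Import structures.
From mathcomp Require Import all_boot all_order all_algebra fraction.
Set Implicit Arguments. Unset Strict Implicit. Unset Printing Implicit Defensive.
Import Order.TTheory GRing.Theory Num.Theory.
Local Open Scope ring_scope.

Definition Qq := {fraction {poly rat}}.
Definition qvar : Qq := @FracField.tofrac {poly rat} 'X.

Section Defs.
Variable F : fieldType.

Definition irange (lo hi : int) : seq int :=
  if (hi < lo)%R then [::]
  else [seq lo + (m%:Z) | m <- iota 0 (absz (hi - lo + 1))].

(* e_{2i}: E-polynomial of Pf°(2i, C^{2i}) = nondegenerate skew forms on
   C^{2i} up to scaling; it is polynomial-count with count
   |GL_{2i}(q)| / (|Sp_{2i}(q)| (q-1)) = q^{i(i-1)} prod_{j=1}^i (q^{2j-1}-1) / (q-1). *)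
Definition e_skew (q : F) (i : nat) : F :=
  q ^+ (i * (i - 1)) * (\prod_(1 <= j < i.+1) (q ^+ (2 * j - 1) - 1)) / (q - 1).

(* g_{a,b} = Gaussian binomial [b choose a]_q *)
Definition gq (q : F) (a b : nat) : F :=
  \prod_(0 <= j < a) ((1 - q ^+ (b - j)) / (1 - q ^+ j.+1)).
End Defs.

From mathcomp Require Import all_boot all_order all_algebra fraction.
From mathcomp Require Import zify ring.
Import Order.TTheory GRing.Theory Num.Theory.
Local Open Scope ring_scope.
Set Implicit Arguments. Unset Strict Implicit. Unset Printing Implicit Defensive.

(* Write n = 2m, Q = q^2 and x = q^(2m-1).  For i <= k the i-th summand is
   C [k choose i]_Q (x - 1)(x - Q)...(x - Q^(i-1)) with C independent of i,
   while for i > k the product over j contains the vanishing factor j = 0.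
   The right-hand side is C (x^k - 1), so the identity is the q-binomial
   expansion x^k = sum_i [k choose i]_Q (x - 1)...(x - Q^(i-1)) without its
   i = 0 term. *)

Section QFactorial.
Variable R : comPzRingType.
Implicit Types (q Q x : R) (r i k : nat).

Definition qfact Q r := \prod_(1 <= t < r.+1) (Q ^+ t - 1).
Definition qfact_odd q r := \prod_(1 <= t < r.+1) (q ^+ (2 * t - 1) - 1).

Lemma qfact0 Q : qfact Q 0 = 1. Proof. by rewrite /qfact big_geq. Qed.
Lemma qfactS Q r : qfact Q r.+1 = qfact Q r * (Q ^+ r.+1 - 1).
Proof. by rewrite /qfact big_nat_recr. Qed.

Lemma qfact_odd0 q : qfact_odd q 0 = 1. Proof. by rewrite /qfact_odd big_geq. Qed.
Lemma qfact_oddS q r : qfact_odd q r.+1 = qfact_odd q r * (q ^+ (2 * r).+1 - 1).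
Proof. by rewrite /qfact_odd big_nat_recr //= mulnS add2n. Qed.

Lemma qfact_double q r : qfact q (2 * r) = qfact (q ^+ 2) r * qfact_odd q r.
Proof.
elim: r => [|r IH]; first by rewrite muln0 !qfact0 qfact_odd0 mulr1.
rewrite mulnS add2n !qfactS IH qfact_oddS -exprM mulnS add2n; ring.
Qed.

Fixpoint qbinom Q k i : R :=
  match k, i with
  | _, 0 => 1
  | 0, _.+1 => 0
  | k'.+1, i'.+1 => qbinom Q k' i' + Q ^+ i'.+1 * qbinom Q k' i'.+1
  end.
Arguments qbinom : simpl never.

Lemma qbinom0 Q k : qbinom Q k 0 = 1. Proof. by case: k. Qed.
Lemma qbinomS Q k i :
  qbinom Q k.+1 i.+1 = qbinom Q k i + Q ^+ i.+1 * qbinom Q k i.+1.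
Proof. by []. Qed.

Lemma qbinom_small Q k i : (k < i)%N -> qbinom Q k i = 0.
Proof.
elim: k i => [|k IH] [|i] // lt_ki.
by rewrite qbinomS !IH ?mulr0 ?addr0 // ltnW.
Qed.

Lemma qbinom_qfact Q k i : (i <= k)%N ->
  qbinom Q k i * (qfact Q i * qfact Q (k - i)) = qfact Q k.
Proof.
elim: k i => [|k IH] [|i] // le_ik; rewrite ?qbinom0 ?qfact0 ?subn0 ?mul1r //.
rewrite qbinomS subSS qfactS.
move: le_ik; rewrite ltnS leq_eqVlt => /predU1P[-> | lt_ik].
  rewrite (qbinom_small _ (ltnSn k)) subnn qfact0 [in RHS]qfactS.
  by rewrite -[in RHS](IH k) // subnn qfact0; ring.
have e1 := IH i (ltnW lt_ik); have e2 := IH i.+1 lt_ik; rewrite qfactS in e2.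
have kiS : (k - i = (k - i.+1).+1)%N by rewrite subnSK.
have expQ : Q ^+ i.+1 * Q ^+ (k - i) = Q ^+ k.+1.
  by rewrite -exprD; congr (_ ^+ _); lia.
transitivity (qbinom Q k i * (qfact Q i * qfact Q (k - i)) * (Q ^+ i.+1 - 1)
  + Q ^+ i.+1 * (qbinom Q k i.+1 * (qfact Q i * (Q ^+ i.+1 - 1)
  * qfact Q (k - i.+1))) * (Q ^+ (k - i) - 1)).
  by rewrite kiS qfactS; ring.
by rewrite e1 e2 qfactS -expQ; ring.
Qed.

Definition qfalling Q x i := \prod_(j < i) (x - Q ^+ j).

Lemma qfalling0 Q x : qfalling Q x 0 = 1. Proof. by rewrite /qfalling big_ord0. Qed.
Lemma qfallingS Q x i : qfalling Q x i.+1 = qfalling Q x i * (x - Q ^+ i).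
Proof. by rewrite /qfalling big_ord_recr. Qed.

Lemma exprn_qfalling Q x k :
  x ^+ k = \sum_(i < k.+1) qbinom Q k i * qfalling Q x i.
Proof.
elim: k => [|k IH]; first by rewrite big_ord1 qbinom0 qfalling0 mulr1.
have shift i : x * (qbinom Q k i * qfalling Q x i) =
    qbinom Q k i * qfalling Q x i.+1 + Q ^+ i * qbinom Q k i * qfalling Q x i.
  by rewrite qfallingS; ring.
rewrite exprS IH mulr_sumr (eq_bigr _ (fun (i : 'I_k.+1) _ => shift i)) big_split /=.
rewrite [in RHS]big_ord_recl qbinom0 qfalling0 mulr1.
under [in RHS]eq_bigr do rewrite qbinomS mulrDl.
rewrite big_split /= addrCA; congr (_ + _).
rewrite [in RHS]big_ord_recr /= qbinom_small // mulr0 mul0r addr0.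
by rewrite big_ord_recl /= qbinom0 qfalling0 expr0 !mulr1.
Qed.

(* x - Q^j = Q^j (q^(2(m-j)-1) - 1) for x = q^(2m-1), Q = q^2. *)
Lemma qfalling_qfact_odd q m i : (i <= m)%N ->
  qfalling (q ^+ 2) (q ^+ (2 * m - 1)) i * qfact_odd q (m - i)
  = q ^+ (i * (i - 1)) * qfact_odd q m.
Proof.
elim: i => [|i IH] lt_im; first by rewrite qfalling0 subn0 mul1r.
have miS : (m - i = (m - i.+1).+1)%N by rewrite subnSK.
have splitx : q ^+ (2 * m - 1) = q ^+ (2 * i) * q ^+ (2 * (m - i.+1)).+1.
  by rewrite -exprD; congr (_ ^+ _); lia.
have expS : q ^+ (i.+1 * (i.+1 - 1)) = q ^+ (2 * i) * q ^+ (i * (i - 1)).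
  rewrite -exprD subSS subn0; congr (_ ^+ _); case: i {IH lt_im miS splitx} => [|i] //.
  by rewrite subSS subn0 mulnC mulSn (mulnC i.+1); lia.
transitivity (q ^+ (2 * i) *
  (qfalling (q ^+ 2) (q ^+ (2 * m - 1)) i * qfact_odd q (m - i))).
  by rewrite miS qfact_oddS qfallingS -exprM splitx; ring.
by rewrite IH ?(ltnW lt_im) // expS mulrA.
Qed.

Lemma prod_irange_eq0 (f : int -> R) (lo hi : int) :
  lo <= 0 -> 0 <= hi -> f 0 = 0 -> \prod_(j <- irange lo hi) f j = 0.
Proof.
move=> lo_le0 hi_ge0 f0; rewrite (big_rem 0) /= ?f0 ?mul0r // /irange.
case: ltP => [hlt | _]; first by exfalso; lia.
by apply/mapP; exists (absz (- lo)); rewrite ?mem_iota; lia.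
Qed.

End QFactorial.

Lemma irange_nat (a b : nat) :
  irange a%:Z b%:Z = [seq j%:Z | j <- index_iota a b.+1].
Proof.
rewrite /irange /index_iota; case: ltP => [lt_ba | le_ab].
  by have -> : (b.+1 - a = 0)%N by lia.
have -> : absz (b%:Z - a%:Z + 1) = (b.+1 - a)%N by lia.
have -> : iota a (b.+1 - a) = map (addn a) (iota 0 (b.+1 - a)).
  by rewrite -iotaDl addn0.
rewrite -map_comp.
by apply: eq_map => t /=; rewrite PoszD.
Qed.

Definition not_unity_root (F : pzRingType) (q : F) :=
  forall a, (0 < a)%N -> q ^+ a - 1 != 0.

Section QFactorialField.
Variables (F : fieldType) (Q : F).
Hypothesis Q_gen : not_unity_root Q.

Lemma qfact_neq0 r : qfact Q r != 0.
Proof.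
elim: r => [|r IH]; first by rewrite qfact0 oner_neq0.
by rewrite qfactS mulf_neq0 ?Q_gen.
Qed.

Lemma qfact_odd_neq0 r : qfact_odd Q r != 0.
Proof.
elim: r => [|r IH]; first by rewrite qfact_odd0 oner_neq0.
by rewrite qfact_oddS mulf_neq0 ?Q_gen.
Qed.

Lemma gq_qfact a b : (a <= b)%N -> gq Q a b = qfact Q b / (qfact Q a * qfact Q (b - a)).
Proof.
elim: a => [|a IH] le_ab.
  by rewrite /gq big_geq // qfact0 subn0 mul1r divff ?qfact_neq0.
rewrite /gq big_nat_recr //= -/(gq Q a b) IH ?(ltnW le_ab) //.
have -> : (b - a = (b - a.+1).+1)%N by rewrite subnSK.
rewrite !qfactS -[1 - _]opprB -[1 - Q ^+ a.+1]opprB invrN mulrNN.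
by field; rewrite !qfact_neq0 !Q_gen // subn_gt0.
Qed.

Lemma prod_qratio c b : (c <= b)%N ->
  \prod_(c.+1 <= j < b.+1) ((Q ^+ j - 1) / (Q ^+ (j - c) - 1))
  = qfact Q b / (qfact Q c * qfact Q (b - c)).
Proof.
move=> /subnKC <-; elim: (b - c)%N => [|d IH].
  by rewrite addKn addn0 big_geq // qfact0 mulr1 divff ?qfact_neq0.
rewrite addnS big_nat_recr ?ltnS ?leq_addr //= IH -addnS !addKn addnS.
by rewrite !qfactS; field; rewrite !qfact_neq0 !Q_gen.
Qed.

End QFactorialField.

Lemma not_unity_root_sqr (F : pzRingType) (q : F) :
  not_unity_root q -> not_unity_root (q ^+ 2).
Proof. by move=> q_gen a a_gt0; rewrite -exprM q_gen ?muln_gt0. Qed.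

Section SkewSum.
Variables (F : fieldType) (q : F).
Hypothesis q_gen : not_unity_root q.
Variables m k : nat.
Hypothesis lt_km : (k < m)%N.

Local Notation Q := (q ^+ 2).
Local Notation x := (q ^+ (2 * m - 1)).
Local Notation C := (qfact Q m / ((q - 1) * qfact Q k * qfact Q (m - k))).

Definition skew_summand i :=
  e_skew q i * gq q (2 * m - 2 * i) (2 * m) *
  \prod_(j <- irange (k%:Z - i%:Z + 1) (m - i)%N%:Z)
     ((exprz q (2 * j) - 1) / (exprz q (2 * j - 2 * k%:Z + 2 * i%:Z) - 1)).

Let Q_gen : not_unity_root Q := not_unity_root_sqr q_gen.
Let q1_neq0 : q - 1 != 0. Proof. by have := q_gen (ltn0Sn 0); rewrite expr1. Qed.

Lemma skew_summand_gt i : (k < i <= m)%N -> skew_summand i = 0.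
Proof.
case/andP=> lt_ki le_im; rewrite /skew_summand prod_irange_eq0 ?mulr0 //.
- lia.
- by rewrite expr0z subrr mul0r.
Qed.

Lemma skew_summand_le i : (i <= k)%N ->
  skew_summand i = C * (qbinom Q k i * qfalling Q x i).
Proof.
move=> le_ik; have le_im : (i <= m)%N by rewrite ltnW ?(leq_ltn_trans le_ik).
have lo_nat : k%:Z - i%:Z + 1 = (k - i).+1%:Z by lia.
have prod_nat : \prod_(j <- irange (k%:Z - i%:Z + 1) (m - i)%N%:Z)
    ((exprz q (2 * j) - 1) / (exprz q (2 * j - 2 * k%:Z + 2 * i%:Z) - 1))
    = \prod_((k - i).+1 <= j < (m - i).+1) ((Q ^+ j - 1) / (Q ^+ (j - (k - i)) - 1)).
  rewrite lo_nat irange_nat big_map; apply: eq_big_nat => j /andP[lt_j _].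
  have -> : 2 * j%:Z = (2 * j)%N%:Z by lia.
  have -> : (2 * j)%N%:Z - 2 * k%:Z + 2 * i%:Z = (2 * (j - (k - i)))%N%:Z by lia.
  by rewrite -!exprM.
rewrite /skew_summand prod_nat (prod_qratio Q_gen (leq_sub2r i (ltnW lt_km))).
rewrite (gq_qfact q_gen (leq_subr _ _)).
have -> : e_skew q i = q ^+ (i * (i - 1)) * qfact_odd q i / (q - 1) by [].
have -> : qbinom Q k i = qfact Q k / (qfact Q i * qfact Q (k - i)).
  by rewrite -(qbinom_qfact Q le_ik) mulfK // mulf_neq0 ?qfact_neq0.
have -> : qfalling Q x i = q ^+ (i * (i - 1)) * qfact_odd q m / qfact_odd q (m - i).
  by rewrite -(qfalling_qfact_odd q le_im) mulfK ?qfact_odd_neq0.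
have -> : (2 * m - (2 * m - 2 * i) = 2 * i)%N by lia.
have -> : (2 * m - 2 * i = 2 * (m - i))%N by rewrite mulnBr.
have -> : (m - i - (k - i) = m - k)%N by lia.
rewrite !qfact_double; field.
by rewrite q1_neq0 !qfact_neq0 ?qfact_odd_neq0.
Qed.

Lemma skew_rhs :
  (q ^+ ((2 * m - 1) * k) - 1) / (q - 1) *
  \prod_(k.+1 <= j < m.+1) ((q ^+ (2 * j) - 1) / (q ^+ (2 * j - 2 * k) - 1))
  = C * (x ^+ k - 1).
Proof.
under eq_bigr do rewrite -mulnBr !exprM.
rewrite prod_qratio ?(ltnW lt_km) // exprM; field.
by rewrite q1_neq0 !qfact_neq0.
Qed.

Lemma skew_sum :
  \sum_(1 <= i < m.+1) skew_summand i
  = (q ^+ ((2 * m - 1) * k) - 1) / (q - 1) *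
    \prod_(k.+1 <= j < m.+1) ((q ^+ (2 * j) - 1) / (q ^+ (2 * j - 2 * k) - 1)).
Proof.
have vanish : \sum_(k.+1 <= i < m.+1) skew_summand i = 0.
  by rewrite big_nat big1 // => i /andP[lt_ki lt_im]; rewrite skew_summand_gt ?lt_ki.
rewrite skew_rhs (big_cat_nat _ (n := k.+1)) //=; last by rewrite ltnS ltnW.
rewrite vanish addr0.
rewrite (eq_big_nat _ _ (F2 := fun i => C * (qbinom Q k i * qfalling Q x i))); last first.
  by move=> i /andP[_ lt_ik]; rewrite skew_summand_le.
rewrite -mulr_sumr (exprn_qfalling Q x k) big_ord_recl qbinom0 qfalling0 mulr1.
rewrite addrAC subrr add0r big_add1 big_mkord.
by congr (_ * _); apply: eq_bigr => i _; rewrite lift0.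
Qed.

End SkewSum.

Lemma qvar_not_unity_root : not_unity_root qvar.
Proof.
move=> a a_gt0; rewrite /qvar -tofracXn -tofrac1 -tofracB tofrac_eq0.
by rewrite -size_poly_eq0 -polyC1 size_XnsubC.
Qed.

Theorem mainTheorem5 (n k : nat) :
  ~~ odd n -> (4 <= n)%N -> (1 <= k)%N -> (2 * k <= n - 2)%N ->
  let q := qvar in
  \sum_(1 <= i < (n./2).+1)
     (e_skew q i * gq q (n - 2 * i) n *
      \prod_(j <- irange (k%:Z - i%:Z + 1) (n./2 - i)%N%:Z)
         ((exprz q (2 * j) - 1) / (exprz q (2 * j - 2 * k%:Z + 2 * i%:Z) - 1)))
  = (q ^+ ((n - 1) * k) - 1) / (q - 1) *
    \prod_(k.+1 <= j < (n./2).+1)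
       ((q ^+ (2 * j) - 1) / (q ^+ (2 * j - 2 * k) - 1)).
Proof.
move=> even_n le4n _ le_kn q.
have [m def_n] : exists m, n = (2 * m)%N.
  by exists n./2; rewrite -[n in LHS]odd_double_half (negbTE even_n) add0n mul2n.
have half_n : n./2 = m by rewrite def_n mul2n doubleK.
rewrite half_n def_n; apply: (skew_sum qvar_not_unity_root); lia.
Qed.
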